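(* Let $f\in\mathcal R^0_{[1]}(\mathbb R^2)$ and $v\in\mathbb R^2$. Then the partial derivative $\partial_v f$ (a regular function on $\mathrm{dom}(f)$) is locally bounded at every point of $\mathrm{pol}(f)$: for each $a\in\mathrm{pol}(f)$ there is a neighbourhood $U$ of $a$ such that $\partial_v f$ is bounded on $U\cap\mathrm{dom}(f)$.
   Context: For $k\in\mathbb N\cup\{\infty\}$, $\mathcal R^k(\mathbb R^2)$ denotes the ring of functions $f:\mathbb R^2\to\mathbb R$ of class $C^k$ that coincide with $p/q$ ($p,q$ polynomials, $q$ nonvanishing there) on some nonempty Zariski open set; $\mathrm{dom}(f)$ is the largest Zariski open set on which the associated rational function is regular and $\mathrm{pol}(f)=\mathbb R^2\setminus\mathrm{dom}(f)$. For $l\in\mathbb N$: consider compositions $\pi:M\to\mathbb R^2$ of successive blowings-up $M_i\to M_{i-1}$ ($M_0=\mathbb R^2$), each centred at points. An infinitely near point of order $j$ is a sequence $a_0\in M_0,\dots,a_j\in M_j$ where $M_i$ is the blowing-up of $M_{i-1}$ at $a_{i-1}$ and $a_i$ maps to $a_{i-1}$; the number of stages of $\pi$ is the maximal order of infinitely near points in $M$. $\mathcal R^k_{[l]}(\mathbb R^2)$ is the set of $f\in\mathcal R^k(\mathbb R^2)$ for which there is such a $\pi$ with at most $l$ stages such that $f\circ\pi$ is regular on $M$. *)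

From Stdlib Require Import Reals List.
Open Scope R_scope.

Definition pt := (R * R)%type.

(* Polynomials in two variables: p = [r_0; r_1; ...], r_i = [c_i0; c_i1; ...]
   represents sum_{i,j} c_ij x^i y^j. *)
Definition poly2 := list (list R).

Fixpoint eval1 (l : list R) (y : R) : R :=
  match l with nil => 0 | c :: l' => c + y * eval1 l' y end.

Fixpoint peval (p : poly2) (z : pt) : R :=
  match p with
  | nil => 0
  | r :: p' => eval1 r (snd z) + fst z * peval p' z
  end.

(* Zariski open subsets of R^2: complements of common zero sets of
   finitely many polynomials. *)
Definition zopen (U : pt -> Prop) : Prop :=
  exists ps : list poly2, forall z, U z <-> exists p, In p ps /\ peval p z <> 0.

Definition dist2 (z w : pt) : R :=
  sqrt ((fst z - fst w)^2 + (snd z - snd w)^2).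

Definition continuous2 (f : pt -> R) : Prop :=
  forall z eps, 0 < eps -> exists delta, 0 < delta /\
    forall w, dist2 w z < delta -> Rabs (f w - f z) < eps.

Definition is_rational (f : pt -> R) : Prop :=
  exists (p q : poly2) (U : pt -> Prop), zopen U /\ (exists z, U z) /\
    forall z, U z -> peval q z <> 0 /\ f z = peval p z / peval q z.

Definition R0 (f : pt -> R) : Prop := continuous2 f /\ is_rational f.

(* The rational function associated with f is regular at z: it admits a
   representative p/q (i.e. p/q = f on a nonempty Zariski open set) with q(z) <> 0. *)
Definition rat_regular_at (f : pt -> R) (z : pt) : Prop :=
  exists p q : poly2, peval q z <> 0 /\
    exists U : pt -> Prop, zopen U /\ (exists w, U w) /\
      forall w, U w -> peval q w <> 0 /\ f w = peval p w / peval q w.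

Definition dom (f : pt -> R) (z : pt) : Prop := rat_regular_at f z.
Definition pol (f : pt -> R) (z : pt) : Prop := ~ dom f z.

Definition regular_at (g : pt -> R) (z : pt) : Prop :=
  exists (p q : poly2) (U : pt -> Prop), zopen U /\ U z /\
    forall w, U w -> peval q w <> 0 /\ g w = peval p w / peval q w.

(* The two affine charts of the blowing-up of R^2 at a; in both charts the
   exceptional divisor is given by the vanishing of one coordinate. *)
Definition chart1 (a : pt) (z : pt) : pt := (fst a + fst z, snd a + fst z * snd z).
Definition chart2 (a : pt) (z : pt) : pt := (fst a + fst z * snd z, snd a + snd z).

(* f o pi is regular on M, where pi : M -> R^2 is the blowing-up of R^2 at
   the finite set of points S (a one-stage composition of point blowings-up). *)
Definition regular_after_blowup (S : list pt) (f : pt -> R) : Prop :=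
  (forall z, ~ In z S -> regular_at f z) /\
  (forall a, In a S ->
     (forall w : R, regular_at (fun z => f (chart1 a z)) (0, w)) /\
     (forall u : R, regular_at (fun z => f (chart2 a z)) (u, 0))).

Definition R0_1 (f : pt -> R) : Prop :=
  R0 f /\ exists S : list pt, regular_after_blowup S f.

Definition line (f : pt -> R) (z v : pt) : R -> R :=
  fun t => f (fst z + t * fst v, snd z + t * snd v).

From Stdlib Require Import Reals List Lra Classical ClassicalEpsilon.
From Coquelicot Require Import Compactness.
Open Scope R_scope.

(* Near a pole a, blow up: in the chart (u, t) |-> (a1 + u, a2 + u t) the function f o pi is,
   near each point (0, w) of the exceptional divisor, a quotient P / Q of polynomials with
   Q (0, w) <> 0, and it is constant along the divisor.  The line through (a1 + x, a2 + y) with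
   |y| <= |x| is the curve s |-> (x + s c1, (y + s c2) / (x + s c1)) in this chart, so by the
   chain rule its derivative at z is (c1 N_u + (c2 - c1 t) N_t / x) / Q^2, where N_u, N_t are the
   numerators of the partial derivatives of P / Q at (x, t), t = y / x.  Constancy on the divisor
   makes N_t vanish on u = 0, hence N_t = O(x), and everything stays bounded.  Compactness of the
   slopes t in [-1, 1] makes the bound uniform; the region |x| <= |y| is the other chart, which is
   the first one after swapping the coordinates. *)

Definition swap (z : pt) : pt := (snd z, fst z).

Definition box (K : R) (z : pt) : Prop := Rabs (fst z) <= K /\ Rabs (snd z) <= K.

Definition sq_ball (z0 : pt) (e : R) (z : pt) : Prop :=
  Rabs (fst z - fst z0) < e /\ Rabs (snd z - snd z0) < e.

Definition lipschitz_on_boxes (h : pt -> R) : Prop :=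
  forall K, exists B L, 0 <= B /\ 0 <= L /\
    forall z z', box K z -> box K z' -> Rabs (h z) <= B /\
      Rabs (h z - h z') <= L * (Rabs (fst z - fst z') + Rabs (snd z - snd z')).

Lemma lipschitz_on_boxes_ext h h' :
  (forall z, h z = h' z) -> lipschitz_on_boxes h -> lipschitz_on_boxes h'.
Proof.
  intros E H K; destruct (H K) as [B [L [HB [HL G]]]].
  exists B, L; do 2 (split; [assumption |]).
  intros z z' Hz Hz'; rewrite <- !E; now apply G.
Qed.

Lemma lipschitz_on_boxes_const c : lipschitz_on_boxes (fun _ => c).
Proof.
  intros K; exists (Rabs c), 0; split; [apply Rabs_pos | split; [lra |]].
  intros z z' _ _; split; [lra |]; unfold Rminus; rewrite Rplus_opp_r, Rabs_R0, Rmult_0_l; lra.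
Qed.

Lemma lipschitz_on_boxes_fst : lipschitz_on_boxes fst.
Proof.
  intros K; exists (Rabs K), 1; split; [apply Rabs_pos | split; [lra |]].
  intros z z' [Hz _] _; split; [eapply Rle_trans; [exact Hz | apply RRle_abs] |].
  pose proof (Rabs_pos (snd z - snd z')); lra.
Qed.

Lemma lipschitz_on_boxes_swap h :
  lipschitz_on_boxes h -> lipschitz_on_boxes (fun z => h (swap z)).
Proof.
  intros H K; destruct (H K) as [B [L [HB [HL G]]]]; exists B, L; do 2 (split; [assumption |]).
  intros z z' [Hz1 Hz2] [Hz1' Hz2'].
  destruct (G (swap z) (swap z') (conj Hz2 Hz1) (conj Hz2' Hz1')) as [Gb Gl].
  simpl in Gl; split; [exact Gb | lra].
Qed.

Lemma lipschitz_on_boxes_plus h1 h2 :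
  lipschitz_on_boxes h1 -> lipschitz_on_boxes h2 -> lipschitz_on_boxes (fun z => h1 z + h2 z).
Proof.
  intros H1 H2 K.
  destruct (H1 K) as [B1 [L1 [? [? G1]]]], (H2 K) as [B2 [L2 [? [? G2]]]].
  exists (B1 + B2), (L1 + L2); do 2 (split; [lra |]).
  intros z z' Hz Hz'; destruct (G1 z z' Hz Hz'), (G2 z z' Hz Hz'); split.
  - eapply Rle_trans; [apply Rabs_triang | lra].
  - replace (h1 z + h2 z - (h1 z' + h2 z')) with ((h1 z - h1 z') + (h2 z - h2 z')) by ring.
    eapply Rle_trans; [apply Rabs_triang | lra].
Qed.

Lemma lipschitz_on_boxes_opp h : lipschitz_on_boxes h -> lipschitz_on_boxes (fun z => - h z).
Proof.
  intros H K; destruct (H K) as [B [L [? [? G]]]]; exists B, L; do 2 (split; [assumption |]).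
  intros z z' Hz Hz'; destruct (G z z' Hz Hz'); split.
  - now rewrite Rabs_Ropp.
  - now replace (- h z - - h z') with (- (h z - h z')) by ring; rewrite Rabs_Ropp.
Qed.

Lemma lipschitz_on_boxes_mult h1 h2 :
  lipschitz_on_boxes h1 -> lipschitz_on_boxes h2 -> lipschitz_on_boxes (fun z => h1 z * h2 z).
Proof.
  intros H1 H2 K.
  destruct (H1 K) as [B1 [L1 [? [? G1]]]], (H2 K) as [B2 [L2 [? [? G2]]]].
  exists (B1 * B2), (B1 * L2 + B2 * L1); do 2 (split; [nra |]).
  intros z z' Hz Hz'; destruct (G1 z z' Hz Hz') as [b1 l1], (G2 z z' Hz Hz') as [b2 l2]; split.
  - rewrite Rabs_mult; apply Rmult_le_compat; auto; apply Rabs_pos.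
  - assert (b2' := proj1 (G2 z' z Hz' Hz)).
    replace (h1 z * h2 z - h1 z' * h2 z') with (h1 z * (h2 z - h2 z') + h2 z' * (h1 z - h1 z')) by ring.
    eapply Rle_trans; [apply Rabs_triang | rewrite !Rabs_mult].
    set (d := Rabs (fst z - fst z') + Rabs (snd z - snd z')) in *.
    assert (Rabs (h1 z) * Rabs (h2 z - h2 z') <= B1 * (L2 * d))
      by (apply Rmult_le_compat; auto; apply Rabs_pos).
    assert (Rabs (h2 z') * Rabs (h1 z - h1 z') <= B2 * (L1 * d))
      by (apply Rmult_le_compat; auto; apply Rabs_pos).
    lra.
Qed.

Lemma lipschitz_on_boxes_bounded_below h z0 :
  lipschitz_on_boxes h -> h z0 <> 0 ->
  exists e, 0 < e /\ forall z, sq_ball z0 e z -> Rabs (h z0) / 2 <= Rabs (h z).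
Proof.
  intros H Hz0; set (K := Rabs (fst z0) + Rabs (snd z0) + 1).
  destruct (H K) as [B [L [_ [HL G]]]].
  assert (Hq : 0 < Rabs (h z0)) by now apply Rabs_pos_lt.
  set (e := Rmin 1 (Rabs (h z0) / (4 * (L + 1)))).
  assert (He1 : e <= 1) by apply Rmin_l.
  assert (HeL : (L + 1) * e <= Rabs (h z0) / 4).
  { replace (Rabs (h z0) / 4) with ((L + 1) * (Rabs (h z0) / (4 * (L + 1)))) by (field; lra).
    apply Rmult_le_compat_l; [lra | apply Rmin_r]. }
  exists e; split; [apply Rmin_pos; [lra | apply Rdiv_lt_0_compat; lra] |].
  intros z [Hu Ht].
  assert (Hcoord : forall c c0, Rabs (c - c0) < e -> Rabs c <= Rabs c0 + 1).
  { intros c c0 Hc; pose proof (Rabs_triang (c - c0) c0) as T.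
    replace (c - c0 + c0) with c in T by ring; lra. }
  pose proof (Rabs_pos (fst z0)); pose proof (Rabs_pos (snd z0)).
  assert (Bz : box K z) by (split; [apply Hcoord in Hu | apply Hcoord in Ht]; unfold K; lra).
  assert (B0 : box K z0) by (split; unfold K; lra).
  destruct (G z z0 Bz B0) as [_ Hd].
  pose proof (Rabs_pos (fst z - fst z0)); pose proof (Rabs_pos (snd z - snd z0)).
  assert (L * (Rabs (fst z - fst z0) + Rabs (snd z - snd z0)) <= Rabs (h z0) / 2) by nra.
  pose proof (Rabs_triang (h z0 - h z) (h z)) as T; replace (h z0 - h z + h z) with (h z0) in T by ring.
  rewrite Rabs_minus_sym in T; lra.
Qed.

Lemma derivable_pt_lim_ext_eq f g x l l' :
  (forall s, f s = g s) -> l = l' -> derivable_pt_lim f x l -> derivable_pt_lim g x l'.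
Proof. intros E <-; apply derivable_pt_lim_ext, E. Qed.

(* A weak form of "P is C^1 with partial derivatives Pu and Pt": the chain rule along
   differentiable curves, together with Lipschitz bounds on P and its partials. *)
Definition has_partials (P Pu Pt : pt -> R) : Prop :=
  lipschitz_on_boxes P /\ lipschitz_on_boxes Pu /\ lipschitz_on_boxes Pt /\
  forall (al be : R -> R) s a' b', derivable_pt_lim al s a' -> derivable_pt_lim be s b' ->
    derivable_pt_lim (fun s => P (al s, be s)) s (Pu (al s, be s) * a' + Pt (al s, be s) * b').

Lemma has_partials_const c : has_partials (fun _ => c) (fun _ => 0) (fun _ => 0).
Proof.
  split; [| split; [| split]]; try apply lipschitz_on_boxes_const.
  intros al be s a' b' _ _; eapply derivable_pt_lim_ext_eq;
    [| | apply (derivable_pt_lim_const c s)]; [reflexivity | ring].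
Qed.

Lemma has_partials_fst : has_partials fst (fun _ => 1) (fun _ => 0).
Proof.
  split; [apply lipschitz_on_boxes_fst | split; [| split]]; try apply lipschitz_on_boxes_const.
  intros al be s a' b' Ha _; eapply derivable_pt_lim_ext_eq; [| | exact Ha]; [reflexivity | ring].
Qed.

Lemma has_partials_swap P Pu Pt :
  has_partials P Pu Pt ->
  has_partials (fun z => P (swap z)) (fun z => Pt (swap z)) (fun z => Pu (swap z)).
Proof.
  intros [LP [LPu [LPt D]]].
  split; [| split; [| split]]; try now apply lipschitz_on_boxes_swap.
  intros al be s a' b' Ha Hb; eapply derivable_pt_lim_ext_eq;
    [| | apply (D be al s b' a' Hb Ha)]; [reflexivity | unfold swap; simpl; ring].
Qed.

Lemma has_partials_snd : has_partials snd (fun _ => 0) (fun _ => 1).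
Proof. exact (has_partials_swap _ _ _ has_partials_fst). Qed.

Lemma has_partials_plus P Pu Pt Q Qu Qt :
  has_partials P Pu Pt -> has_partials Q Qu Qt ->
  has_partials (fun z => P z + Q z) (fun z => Pu z + Qu z) (fun z => Pt z + Qt z).
Proof.
  intros [LP [LPu [LPt DP]]] [LQ [LQu [LQt DQ]]].
  split; [| split; [| split]]; try now apply lipschitz_on_boxes_plus.
  intros al be s a' b' Ha Hb; eapply derivable_pt_lim_ext_eq;
    [| | apply derivable_pt_lim_plus; [apply (DP al be s a' b' Ha Hb) | apply (DQ al be s a' b' Ha Hb)]];
    [reflexivity | ring].
Qed.

Lemma has_partials_mult P Pu Pt Q Qu Qt :
  has_partials P Pu Pt -> has_partials Q Qu Qt ->
  has_partials (fun z => P z * Q z)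
    (fun z => Pu z * Q z + P z * Qu z) (fun z => Pt z * Q z + P z * Qt z).
Proof.
  intros [LP [LPu [LPt DP]]] [LQ [LQu [LQt DQ]]].
  split; [now apply lipschitz_on_boxes_mult | split; [| split]];
    try (apply lipschitz_on_boxes_plus; now apply lipschitz_on_boxes_mult).
  intros al be s a' b' Ha Hb; eapply derivable_pt_lim_ext_eq;
    [| | apply derivable_pt_lim_mult; [apply (DP al be s a' b' Ha Hb) | apply (DQ al be s a' b' Ha Hb)]];
    [reflexivity | cbv beta; ring].
Qed.

Lemma has_partials_ext P P' Pu Pt :
  (forall z, P z = P' z) -> has_partials P Pu Pt -> has_partials P' Pu Pt.
Proof.
  intros E [LP [LPu [LPt D]]]; split; [now apply (lipschitz_on_boxes_ext P) | do 2 (split; [assumption |])].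
  intros; eapply derivable_pt_lim_ext_eq; [| reflexivity | apply D; eauto]; intros; apply E.
Qed.

Lemma has_partials_eval1 l : exists Pu Pt, has_partials (fun z => eval1 l (snd z)) Pu Pt.
Proof.
  induction l as [| c l [Pu [Pt IH]]]; [eexists; eexists; exact (has_partials_const 0) |].
  eexists; eexists; eapply has_partials_ext;
    [| apply has_partials_plus; [apply (has_partials_const c) |
                                 apply has_partials_mult; [apply has_partials_snd | apply IH]]].
  reflexivity.
Qed.

Lemma has_partials_peval p : exists Pu Pt, has_partials (peval p) Pu Pt.
Proof.
  induction p as [| r p [Pu [Pt IH]]]; [eexists; eexists; exact (has_partials_const 0) |].
  destruct (has_partials_eval1 r) as [Ru [Rt HR]].
  eexists; eexists; eapply has_partials_ext;
    [| apply has_partials_plus; [apply HR | apply has_partials_mult; [apply has_partials_fst | apply IH]]].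
  reflexivity.
Qed.

Definition quotient_num (P Pd Q Qd : pt -> R) (z : pt) : R := Pd z * Q z - P z * Qd z.

Lemma lipschitz_on_boxes_quotient_num P Pd Q Qd :
  lipschitz_on_boxes P -> lipschitz_on_boxes Pd -> lipschitz_on_boxes Q -> lipschitz_on_boxes Qd ->
  lipschitz_on_boxes (quotient_num P Pd Q Qd).
Proof.
  intros LP LPd LQ LQd.
  apply (lipschitz_on_boxes_ext (fun z => Pd z * Q z + - (P z * Qd z))).
  - intros z; unfold quotient_num; ring.
  - apply lipschitz_on_boxes_plus; [| apply lipschitz_on_boxes_opp];
      now apply lipschitz_on_boxes_mult.
Qed.

Lemma quotient_chain_rule P Pu Pt Q Qu Qt al be s0 a' b' :
  has_partials P Pu Pt -> has_partials Q Qu Qt ->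
  derivable_pt_lim al s0 a' -> derivable_pt_lim be s0 b' -> Q (al s0, be s0) <> 0 ->
  derivable_pt_lim (fun s => P (al s, be s) / Q (al s, be s)) s0
    ((a' * quotient_num P Pu Q Qu (al s0, be s0) + b' * quotient_num P Pt Q Qt (al s0, be s0))
       / (Q (al s0, be s0))²).
Proof.
  intros [_ [_ [_ DP]]] [_ [_ [_ DQ]]] Ha Hb HQ.
  eapply derivable_pt_lim_ext_eq; [| | apply (derivable_pt_lim_div _ _ s0 _ _ (DP al be s0 a' b' Ha Hb)
                                                 (DQ al be s0 a' b' Ha Hb) HQ)].
  - reflexivity.
  - unfold quotient_num, Rsqr; field; exact HQ.
Qed.

Lemma derivable_pt_lim_near f x l :
  derivable_pt_lim f x l -> forall eps, 0 < eps ->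
  exists d, 0 < d /\ forall y, Rabs (y - x) < d -> Rabs (f y - f x) < eps.
Proof.
  intros H eps Heps.
  assert (C : continuity_pt f x) by (apply derivable_continuous_pt; exists l; exact H).
  destruct (C eps Heps) as [d [Hd G]]; exists d; split; [exact Hd |]; intros y Hy.
  destruct (Req_dec y x) as [-> | Hne].
  - unfold Rminus; rewrite Rplus_opp_r, Rabs_R0; lra.
  - apply (G y); split; [split; [exact I | auto] | exact Hy].
Qed.

Lemma curve_eventually_in_ball al be a' b' z0 e :
  derivable_pt_lim al 0 a' -> derivable_pt_lim be 0 b' -> sq_ball z0 e (al 0, be 0) ->
  exists d, 0 < d /\ forall s, -d < s < d -> sq_ball z0 e (al s, be s).
Proof.
  intros Ha Hb [H1 H2]; simpl in H1, H2.
  destruct (derivable_pt_lim_near _ _ _ Ha (e - Rabs (al 0 - fst z0))) as [d1 [Hd1 C1]]; [lra |].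
  destruct (derivable_pt_lim_near _ _ _ Hb (e - Rabs (be 0 - snd z0))) as [d2 [Hd2 C2]]; [lra |].
  exists (Rmin d1 d2); split; [now apply Rmin_pos |]; intros s Hs.
  assert (Hs' : Rabs (s - 0) < Rmin d1 d2) by (rewrite Rminus_0_r; apply Rabs_def1; lra).
  pose proof (C1 s (Rlt_le_trans _ _ _ Hs' (Rmin_l _ _))) as E1.
  pose proof (C2 s (Rlt_le_trans _ _ _ Hs' (Rmin_r _ _))) as E2.
  pose proof (Rabs_triang (al s - al 0) (al 0 - fst z0)).
  pose proof (Rabs_triang (be s - be 0) (be 0 - snd z0)).
  split; simpl.
  - replace (al s - fst z0) with (al s - al 0 + (al 0 - fst z0)) by ring; lra.
  - replace (be s - snd z0) with (be s - be 0 + (be 0 - snd z0)) by ring; lra.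
Qed.

Definition quotient_near (g : pt -> R) (z0 : pt) : Prop :=
  exists P Pu Pt Q Qu Qt : pt -> R, has_partials P Pu Pt /\ has_partials Q Qu Qt /\
    Q z0 <> 0 /\ exists e, 0 < e /\ forall z, sq_ball z0 e z -> g z = P z / Q z.

Lemma quotient_near_ext g g' z0 :
  (forall z, g z = g' z) -> quotient_near g z0 -> quotient_near g' z0.
Proof.
  intros E [P [Pu [Pt [Q [Qu [Qt [HP [HQ [HQ0 [e [He Hg]]]]]]]]]]].
  exists P, Pu, Pt, Q, Qu, Qt; do 3 (split; [assumption |]).
  exists e; split; [exact He |]; intros z Hz; rewrite <- E; now apply Hg.
Qed.

Lemma quotient_near_swap g z0 :
  quotient_near g z0 -> quotient_near (fun z => g (swap z)) (swap z0).
Proof.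
  intros [P [Pu [Pt [Q [Qu [Qt [HP [HQ [HQ0 [e [He Hg]]]]]]]]]]].
  do 6 eexists; split; [exact (has_partials_swap _ _ _ HP) |].
  split; [exact (has_partials_swap _ _ _ HQ) |].
  split; [now destruct z0 |].
  exists e; split; [exact He |]; intros z [H1 H2]; apply Hg; split; assumption.
Qed.

Lemma regular_at_quotient_near g z0 : regular_at g z0 -> quotient_near g z0.
Proof.
  intros [p [q [U [[ps Hps] [HU Hreg]]]]].
  destruct (proj1 (Hps z0) HU) as [p0 [Hin Hp0]].
  destruct (has_partials_peval p0) as [? [? [Lp0 _]]].
  destruct (lipschitz_on_boxes_bounded_below _ z0 Lp0 Hp0) as [e [He Hbelow]].
  destruct (has_partials_peval p) as [Pu [Pt HP]], (has_partials_peval q) as [Qu [Qt HQ]].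
  exists (peval p), Pu, Pt, (peval q), Qu, Qt; do 2 (split; [assumption |]).
  split; [apply (Hreg z0 HU) |].
  exists e; split; [exact He |]; intros z Hz.
  apply Hreg, Hps; exists p0; split; [exact Hin |]; intros Z.
  specialize (Hbelow z Hz); rewrite Z, Rabs_R0 in Hbelow.
  pose proof (Rabs_pos_lt _ Hp0); lra.
Qed.

Lemma derivable_pt_lim_affine x c s0 : derivable_pt_lim (fun s => x + s * c) s0 c.
Proof.
  eapply derivable_pt_lim_ext_eq; [| | apply derivable_pt_lim_plus;
    [apply (derivable_pt_lim_const x) |
     apply derivable_pt_lim_mult; [apply derivable_pt_lim_id | apply (derivable_pt_lim_const c)]]].
  - reflexivity.
  - unfold id, fct_cte; ring.
Qed.

(* The line through (a1 + x, a2 + y) in direction (c1, c2), read in the first blow-up chart. *)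
Definition chart_line (g : pt -> R) (x y c1 c2 s : R) : R :=
  g (x + s * c1, (y + s * c2) / (x + s * c1)).

Definition derivative_at0_bounded (F : R -> R) (M : R) : Prop :=
  exists l, derivable_pt_lim F 0 l /\ Rabs l <= M.

Lemma derivative_at0_bounded_le F M M' :
  M <= M' -> derivative_at0_bounded F M -> derivative_at0_bounded F M'.
Proof. intros HM [l [Hl Hb]]; exists l; split; [exact Hl | lra]. Qed.

Lemma Rabs_div_le a x b : x <> 0 -> Rabs a <= b * Rabs x -> Rabs (a / x) <= b.
Proof.
  intros Hx Ha; pose proof (Rabs_pos_lt x Hx); unfold Rdiv; rewrite Rabs_mult, Rabs_inv.
  apply (Rmult_le_reg_r (Rabs x)); [lra |]; rewrite Rmult_assoc, Rinv_l; lra.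
Qed.

Lemma chart_derivative_estimate x y c1 c2 Nu Nt Qv BD LN K q :
  x <> 0 -> Rabs Nu <= BD -> Rabs Nt <= LN * Rabs x -> Rabs (y / x) <= K ->
  0 < q <= Rabs Qv -> 0 <= LN ->
  Rabs ((c1 * Nu + (c2 * x - c1 * y) / x² * Nt) / Qv²)
    <= (BD * Rabs c1 + LN * (Rabs c2 + Rabs c1 * K)) / q².
Proof.
  intros Hx HNu HNt Ht Hq HLN.
  assert (HQv : Qv <> 0) by (intros ->; rewrite Rabs_R0 in Hq; lra).
  replace ((c1 * Nu + (c2 * x - c1 * y) / x² * Nt) / Qv²)
    with ((c1 * Nu + (c2 - c1 * (y / x)) * (Nt / x)) * / Qv²) by (unfold Rsqr; field; auto).
  rewrite Rabs_mult, Rabs_inv, (Rabs_pos_eq (Qv²)) by apply Rle_0_sqr.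
  apply Rmult_le_compat; [apply Rabs_pos | left; apply Rinv_0_lt_compat; unfold Rsqr; nra | |].
  - assert (HNtx : Rabs (Nt / x) <= LN) by now apply Rabs_div_le.
    assert (Hc : Rabs (c2 - c1 * (y / x)) <= Rabs c2 + Rabs c1 * K).
    { eapply Rle_trans; [apply Rabs_triang | rewrite Rabs_Ropp, Rabs_mult].
      pose proof (Rabs_pos c1); nra. }
    eapply Rle_trans; [apply Rabs_triang | rewrite !Rabs_mult].
    pose proof (Rabs_pos c1); pose proof (Rabs_pos Nu); pose proof (Rabs_pos (Nt / x));
      pose proof (Rabs_pos (c2 - c1 * (y / x))); nra.
  - apply Rinv_le_contravar; [unfold Rsqr; nra |]; rewrite (Rsqr_abs Qv); apply Rsqr_incr_1; lra.
Qed.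

Section QuotientChart.

Variables (g P Pu Pt Q Qu Qt : pt -> R) (w e : R).
Hypotheses (HP : has_partials P Pu Pt) (HQ : has_partials Q Qu Qt) (HQw : Q (0, w) <> 0)
  (He : 0 < e) (Hg : forall z, sq_ball (0, w) e z -> g z = P z / Q z)
  (Hdiv : forall t, g (0, t) = g (0, 0)).

Lemma quotient_num_vanishes_on_divisor t :
  Rabs (t - w) < e -> Q (0, t) <> 0 -> quotient_num P Pt Q Qt (0, t) = 0.
Proof.
  intros Ht HQt.
  assert (Dq := quotient_chain_rule _ _ _ _ _ _ (fun _ => 0) (fun s => s) t 0 1 HP HQ
                  (derivable_pt_lim_const 0 t) (derivable_pt_lim_id t) HQt).
  assert (Dc : derivable_pt_lim (fun s => P (0, s) / Q (0, s)) t 0).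
  { set (m := e - Rabs (t - w)).
    apply (derivable_pt_lim_locally_ext (fun _ => g (0, 0)) _ t (t - m) (t + m));
      [unfold m; lra | | apply derivable_pt_lim_const].
    intros s Hs; rewrite <- (Hdiv s); apply Hg; split; simpl; [rewrite Rminus_0_r, Rabs_R0; lra |].
    assert (Rabs (s - t) < m) by (apply Rabs_def1; lra).
    replace (s - w) with ((s - t) + (t - w)) by ring.
    eapply Rle_lt_trans; [apply Rabs_triang | unfold m in *; lra]. }
  pose proof (uniqueness_limite _ _ _ _ Dq Dc) as E.
  cbv beta in E; unfold Rdiv in E; apply Rmult_integral in E as [E | E]; [lra |].
  exfalso; revert E; apply Rinv_neq_0_compat, Rgt_not_eq, Rlt_0_sqr, HQt.
Qed.

Lemma chart_line_derivative x y c1 c2 :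
  x <> 0 -> sq_ball (0, w) e (x, y / x) -> Q (x, y / x) <> 0 ->
  derivable_pt_lim (chart_line g x y c1 c2) 0
    ((c1 * quotient_num P Pu Q Qu (x, y / x) + (c2 * x - c1 * y) / x² * quotient_num P Pt Q Qt (x, y / x))
       / (Q (x, y / x))²).
Proof.
  intros Hx Hball HQx.
  set (al := fun s => x + s * c1); set (be := fun s => (y + s * c2) / (x + s * c1)).
  assert (E0 : (al 0, be 0) = (x, y / x)) by (unfold al, be; rewrite !Rmult_0_l, !Rplus_0_r; reflexivity).
  assert (Dal : derivable_pt_lim al 0 c1) by apply derivable_pt_lim_affine.
  assert (Dbe : derivable_pt_lim be 0 ((c2 * x - c1 * y) / x²)).
  { assert (Hx0 : x + 0 * c1 <> 0) by (rewrite Rmult_0_l, Rplus_0_r; exact Hx).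
    eapply derivable_pt_lim_ext_eq; [| | apply (derivable_pt_lim_div _ _ 0 _ _
      (derivable_pt_lim_affine y c2 0) (derivable_pt_lim_affine x c1 0) Hx0)].
    - reflexivity.
    - rewrite !Rmult_0_l, !Rplus_0_r; reflexivity. }
  rewrite <- E0 in Hball, HQx |- *.
  destruct (curve_eventually_in_ball _ _ _ _ _ _ Dal Dbe Hball) as [d [Hd Hcurve]].
  apply (derivable_pt_lim_locally_ext (fun s => P (al s, be s) / Q (al s, be s)) _ 0 (- d) d);
    [lra | intros s Hs; symmetry; apply Hg, Hcurve, Hs |].
  eapply derivable_pt_lim_ext_eq; [reflexivity | | exact (quotient_chain_rule _ _ _ _ _ _ _ _ _ _ _ HP HQ Dal Dbe HQx)].
  reflexivity.
Qed.

Lemma chart_line_bound c1 c2 :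
  exists r M, 0 < r /\ forall x y, x <> 0 -> Rabs x < r -> Rabs (y / x - w) < r ->
    derivative_at0_bounded (chart_line g x y c1 c2) M.
Proof.
  destruct HP as [LP [LPu [LPt _]]]; destruct HQ as [LQ [LQu [LQt _]]].
  destruct (lipschitz_on_boxes_bounded_below Q (0, w) LQ HQw) as [e1 [He1 HQbelow]].
  set (q := Rabs (Q (0, w)) / 2); assert (Hq : 0 < q) by (apply Rabs_pos_lt in HQw; unfold q; lra).
  set (K := Rabs w + 1); pose proof (Rabs_pos w).
  destruct (lipschitz_on_boxes_quotient_num _ _ _ _ LP LPu LQ LQu K) as [BD [LD [_ [_ Gu]]]].
  destruct (lipschitz_on_boxes_quotient_num _ _ _ _ LP LPt LQ LQt K) as [BN [LN [_ [HLN Gt]]]].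
  set (r := Rmin 1 (Rmin e e1)).
  assert (Hr1 : r <= 1) by apply Rmin_l.
  assert (Hre : r <= e) by (eapply Rle_trans; [apply Rmin_r | apply Rmin_l]).
  assert (Hre1 : r <= e1) by (eapply Rle_trans; [apply Rmin_r | apply Rmin_r]).
  exists r, ((BD * Rabs c1 + LN * (Rabs c2 + Rabs c1 * K)) / q²).
  split; [apply Rmin_pos; [lra | now apply Rmin_pos] |].
  intros x y Hx0 Hx Hy; set (t0 := y / x) in *.
  assert (Ht0 : Rabs t0 <= K).
  { pose proof (Rabs_triang (t0 - w) w); replace (t0 - w + w) with t0 in H0 by ring; unfold K; lra. }
  assert (Bx : box K (x, t0)) by (split; simpl; [unfold K; lra | exact Ht0]).
  assert (B0 : box K (0, t0)) by (split; simpl; [rewrite Rabs_R0; unfold K; lra | exact Ht0]).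
  assert (Qnear : forall u, Rabs u < r -> q <= Rabs (Q (u, t0))).
  { intros u Hu; apply HQbelow; split; simpl; [rewrite Rminus_0_r |]; lra. }
  assert (Qnz : forall u, Rabs u < r -> Q (u, t0) <> 0).
  { intros u Hu Z; specialize (Qnear u Hu); rewrite Z, Rabs_R0 in Qnear; lra. }
  assert (Hu0 : Rabs 0 < r) by (rewrite Rabs_R0; apply Rmin_pos; [lra | now apply Rmin_pos]).
  assert (Nt0 : quotient_num P Pt Q Qt (0, t0) = 0)
    by (apply quotient_num_vanishes_on_divisor; [lra | now apply Qnz]).
  assert (HNt : Rabs (quotient_num P Pt Q Qt (x, t0)) <= LN * Rabs x).
  { destruct (Gt _ _ Bx B0) as [_ Hd]; simpl in Hd.
    rewrite Nt0, !Rminus_0_r, Rminus_diag, Rabs_R0, Rplus_0_r in Hd; exact Hd. }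
  eexists; split.
  - apply chart_line_derivative; [exact Hx0 | split; simpl; [rewrite Rminus_0_r; lra | fold t0; lra] | now apply Qnz].
  - apply chart_derivative_estimate; try assumption.
    + exact (proj1 (Gu _ _ Bx Bx)).
    + split; [exact Hq | now apply Qnear].
Qed.

End QuotientChart.

Lemma chart_line_bound_uniform g c1 c2 :
  (forall t, g (0, t) = g (0, 0)) -> (forall w, quotient_near g (0, w)) ->
  exists d M, 0 < d /\ forall x y, x <> 0 -> Rabs x < d -> Rabs y <= Rabs x ->
    derivative_at0_bounded (chart_line g x y c1 c2) M.
Proof.
  intros Hdiv Hq.
  assert (Hloc : forall w, exists rM : R * R, 0 < fst rM /\
            forall x y, x <> 0 -> Rabs x < fst rM -> Rabs (y / x - w) < fst rM ->
              derivative_at0_bounded (chart_line g x y c1 c2) (snd rM)).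
  { intros w; destruct (Hq w) as [P [Pu [Pt [Q [Qu [Qt [HP [HQ [HQw [e [He Hg]]]]]]]]]]].
    destruct (chart_line_bound g P Pu Pt Q Qu Qt w e HP HQ HQw He Hg Hdiv c1 c2) as [r [M HrM]].
    now exists (r, M). }
  destruct (choice _ Hloc) as [rM HrM].
  (* Radii min (r_w, 1 / (|M_w| + 1)): a Lebesgue number d of this cover of [-1, 1]
     bounds every bound M_w that gets used by 1 / d. *)
  assert (Hpos : forall w, 0 < Rmin (fst (rM w)) (/ (Rabs (snd (rM w)) + 1))).
  { intros w; apply Rmin_pos; [apply HrM |].
    apply Rinv_0_lt_compat; pose proof (Rabs_pos (snd (rM w))); lra. }
  destruct (compactness_value_1d (-1) 1 (fun w => mkposreal _ (Hpos w))) as [d Hd]; simpl in Hd.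
  exists d, (/ d); split; [apply cond_pos |]; intros x y Hx0 Hx Hy.
  assert (Hyx : -1 <= y / x <= 1).
  { assert (Rabs (y / x) <= 1) by (apply Rabs_div_le; lra).
    pose proof (RRle_abs (y / x)); pose proof (RRle_abs (- (y / x))); rewrite Rabs_Ropp in *; lra. }
  apply NNPP; intros Hnot; apply (Hd _ Hyx); intros [w [_ [Hw Hdw]]].
  apply Hnot; clear Hnot.
  pose proof (Rmin_l (fst (rM w)) (/ (Rabs (snd (rM w)) + 1))).
  pose proof (Rmin_r (fst (rM w)) (/ (Rabs (snd (rM w)) + 1))).
  apply (derivative_at0_bounded_le _ (snd (rM w))); [| apply HrM; auto; lra].
  pose proof (cond_pos d); pose proof (Rabs_pos (snd (rM w))); pose proof (RRle_abs (snd (rM w))).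
  assert (Rabs (snd (rM w)) + 1 <= / d).
  { rewrite <- (Rinv_inv (Rabs (snd (rM w)) + 1)); apply Rinv_le_contravar; lra. }
  lra.
Qed.

Lemma derivable_pt_lim_ext_off_zero F G x c l :
  x <> 0 -> (forall s, x + s * c <> 0 -> F s = G s) ->
  derivable_pt_lim G 0 l -> derivable_pt_lim F 0 l.
Proof.
  intros Hx E; pose proof (Rabs_pos_lt x Hx); pose proof (Rabs_pos c).
  set (d := Rabs x / (Rabs c + 1)).
  assert (Hd : 0 < d) by (apply Rdiv_lt_0_compat; lra).
  apply (derivable_pt_lim_locally_ext G F 0 (- d) d); [lra |].
  intros s Hs; symmetry; apply E; intros Z.
  assert (Hsd : Rabs s < d) by (apply Rabs_def1; lra).
  assert (Hdc : d * (Rabs c + 1) = Rabs x) by (unfold d; field; lra).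
  assert (Rabs (s * c) = Rabs x)
    by (replace (s * c) with (- x) by lra; apply Rabs_Ropp).
  rewrite Rabs_mult in H1; pose proof (Rabs_pos s); nra.
Qed.

Lemma line_derivative_bound_chart1 f a v :
  (forall w, quotient_near (fun z => f (chart1 a z)) (0, w)) ->
  exists d M, 0 < d /\ forall z, fst z - fst a <> 0 -> Rabs (fst z - fst a) < d ->
    Rabs (snd z - snd a) <= Rabs (fst z - fst a) -> derivative_at0_bounded (line f z v) M.
Proof.
  intros Hq.
  destruct (chart_line_bound_uniform (fun z => f (chart1 a z)) (fst v) (snd v)) as [d [M [Hd B]]];
    [intros t; unfold chart1; simpl; now rewrite !Rmult_0_l | exact Hq |].
  exists d, M; split; [exact Hd |]; intros z Hx0 Hx Hy.
  destruct (B _ _ Hx0 Hx Hy) as [l [Hl Hlb]]; exists l; split; [| exact Hlb].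
  eapply (derivable_pt_lim_ext_off_zero _ _ _ (fst v) _ Hx0); [| exact Hl].
  intros s Hs; unfold line, chart_line, chart1; simpl; f_equal; f_equal; [ring | field; exact Hs].
Qed.

Lemma regular_at_dom f z : regular_at f z -> dom f z.
Proof.
  intros [p [q [U [HU [Hz Hreg]]]]]; exists p, q; split; [apply (Hreg z Hz) |].
  exists U; split; [exact HU | split; [now exists z | exact Hreg]].
Qed.

Lemma pol_in_centres f S a : (forall z, ~ In z S -> regular_at f z) -> pol f a -> In a S.
Proof. intros Hout Hpol; apply NNPP; intros Hn; apply Hpol, regular_at_dom, Hout, Hn. Qed.

Lemma dist2_ge_coordinates z a :
  Rabs (fst z - fst a) <= dist2 z a /\ Rabs (snd z - snd a) <= dist2 z a.
Proof.
  pose proof (pow2_ge_0 (fst z - fst a)); pose proof (pow2_ge_0 (snd z - snd a)).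
  unfold dist2; split; rewrite <- sqrt_Rsqr_abs; apply sqrt_le_1_alt; rewrite Rsqr_pow2; lra.
Qed.

Lemma dominant_coordinate z a :
  z <> a ->
  (fst z - fst a <> 0 /\ Rabs (snd z - snd a) <= Rabs (fst z - fst a)) \/
  (snd z - snd a <> 0 /\ Rabs (fst z - fst a) <= Rabs (snd z - snd a)).
Proof.
  destruct z as [z1 z2], a as [a1 a2]; simpl; intros Hza.
  destruct (Rle_lt_dec (Rabs (z2 - a2)) (Rabs (z1 - a1))) as [Hle | Hlt]; [left | right];
    (split; [intros E | lra]).
  - destruct (Req_dec (z2 - a2) 0) as [E' | E'].
    + apply Hza; f_equal; lra.
    + rewrite E, Rabs_R0 in Hle; pose proof (Rabs_pos_lt _ E'); lra.
  - rewrite E, Rabs_R0 in Hlt; pose proof (Rabs_pos (z1 - a1)); lra.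
Qed.

Theorem proposition3p6 (f : pt -> R) (v : pt) :
  R0_1 f ->
  forall a : pt, pol f a ->
    exists delta M : R, 0 < delta /\
      forall z : pt, dist2 z a < delta -> dom f z ->
        exists l : R, derivable_pt_lim (line f z v) 0 l /\ Rabs l <= M.
Proof.
  intros [_ [S [Hout Hin]]] a Hpol.
  destruct (Hin a (pol_in_centres f S a Hout Hpol)) as [H1 H2].
  destruct (line_derivative_bound_chart1 f a v) as [d1 [M1 [Hd1 B1]]].
  { intros w; apply regular_at_quotient_near, H1. }
  destruct (line_derivative_bound_chart1 (fun z => f (swap z)) (swap a) (swap v))
    as [d2 [M2 [Hd2 B2]]].
  { intros w; apply (quotient_near_ext (fun z => f (chart2 a (swap z))));
      [intros z; unfold chart1, chart2, swap; simpl; do 2 f_equal; ring |].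
    exact (quotient_near_swap _ (w, 0) (regular_at_quotient_near _ _ (H2 w))). }
  exists (Rmin d1 d2), (Rmax M1 M2); split; [now apply Rmin_pos |]; intros z Hz Hdom.
  destruct (dist2_ge_coordinates z a) as [Hx Hy].
  pose proof (Rmin_l d1 d2); pose proof (Rmin_r d1 d2).
  destruct (dominant_coordinate z a) as [[Hx0 Hle] | [Hy0 Hle]]; [now intros -> |..].
  - apply (derivative_at0_bounded_le _ M1); [apply Rmax_l | apply B1; auto; lra].
  - apply (derivative_at0_bounded_le _ M2); [apply Rmax_r | apply (B2 (swap z)); simpl; auto; lra].
Qed.
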